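(* Let $\mathbf{Phys}$ and $\ast\mathbf{Mod}$ be as in the context. The assignments $(A,\varphi)\mapsto (A, GNS(\varphi))$ on objects, and, for a morphism $f:(A,\varphi)\to(B,\psi)$ of $\mathbf{Phys}$ (a $\ast$-homomorphism $f:B\to A$), $$GNS(f) : GNS(\psi)=B/B^\perp \to GNS(\varphi)=A/A^\perp,\qquad [x]\mapsto [f(x)],$$ are well defined, with $(f, GNS(f))$ a morphism $(B,GNS(\psi))\to(A,GNS(\varphi))$ of $\ast\mathbf{Mod}$, and they form a strong symmetric monoidal contravariant functor $GNS:\mathbf{Phys}^{op}\to\ast\mathbf{Mod}$ lying over the functor $(A,\varphi)\mapsto A$; in particular $GNS(\varphi\otimes\psi)\cong GNS(\varphi)\otimes GNS(\psi)$ via $[a\otimes b]\mapsto [a]\otimes[b]$.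
   Context: $\ast$-algebras: unital complex algebras with conjugate-linear involutive anti-homomorphism $\ast$; $\ast$-homomorphisms unital and $\ast$-preserving. Hermitian forms linear in the first variable, possibly indefinite. A $\ast$-module over $A$: vector space with nondegenerate Hermitian form and unital left $A$-module structure with $\langle am,n\rangle=\langle m,a^\ast n\rangle$. A representable state on $A$ is a linear $\varphi:A\to\mathbb{C}$ with $\varphi(a^\ast)=\overline{\varphi(a)}$; $A^\perp$ is the radical of $\langle a,b\rangle_\varphi=\varphi(b^\ast a)$ and $GNS(\varphi)=A/A^\perp$ with induced form and left multiplication. A $\ast$-homomorphism $f:B\to A$ is admissible for a representable state $\varphi$ on $A$ if $B^\perp\subseteq f^{-1}(A^\perp)$, with $B^\perp$ computed for $\varphi\circ f$. $\mathbf{Phys}$: objects are pairs $(A,\varphi)$, $\varphi$ a representable state on $A$; morphisms $(A,\varphi)\to(B,\psi)$ are $\ast$-homomorphisms $f:B\to A$ with $\varphi\circ f=\psi$ that are admissible for $\varphi$; composition is composition of homomorphisms; monoidal product $(A,\varphi)\otimes(B,\psi)=(A\otimes B,\varphi\otimes\psi)$, unit $(\mathbb{C},\mathrm{id})$. $\ast\mathbf{Mod}$: objects pairs $(A,M)$ with $M$ a $\ast$-module over $A$; morphisms $(A,M)\to(B,N)$ are pairs $(f,h)$ with $f:A\to B$ a $\ast$-homomorphism and $h:M\to N$ a linear isometry ($\langle hx,hy\rangle=\langle x,y\rangle$) with $h(am)=f(a)h(m)$; monoidal product $(A,M)\otimes(B,N)=(A\otimes B, M\otimes N)$ with form $\langle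 m\otimes n,m'\otimes n'\rangle=\langle m,m'\rangle\langle n,n'\rangle$. *)

From HB Require Import structures.
From mathcomp Require Import all_boot all_order all_algebra.
From mathcomp Require Import reals complex.
From Stdlib Require Import ClassicalEpsilon.
Set Implicit Arguments. Unset Strict Implicit. Unset Printing Implicit Defensive.
Import Order.TTheory GRing.Theory Num.Theory.
Local Open Scope ring_scope.

Section StarDefs.
Variable C : numClosedFieldType.

Definition lin (V W : lmodType C) (f : V -> W) :=
  forall (c : C) x y, f (c *: x + y) = c *: f x + f y.
Definition lfun (V : lmodType C) (f : V -> C) :=
  forall (c : C) x y, f (c *: x + y) = c * f x + f y.
Definition bilin (U V W : lmodType C) (t : U -> V -> W) :=
  (forall v, lin (fun u => t u v)) /\ (forall u, lin (t u)).

Definition is_tensor (V W T : lmodType C) (t : V -> W -> T) :=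
  bilin t /\
  forall (U : lmodType C) (g : V -> W -> U), bilin g ->
    exists! h : T -> U, lin h /\ forall v w, h (t v w) = g v w.

Definition tensor_map (V W T V' W' T' : lmodType C)
  (t : V -> W -> T) (t' : V' -> W' -> T') (u : V -> V') (w : W -> W')
  (k : T -> T') := lin k /\ forall v x, k (t v x) = t' (u v) (w x).

Record starAlg := StarAlg {
  sa_car :> lmodType C;
  sa_mul : sa_car -> sa_car -> sa_car;
  sa_one : sa_car;
  sa_star : sa_car -> sa_car;
  sa_mulA : forall a b c, sa_mul a (sa_mul b c) = sa_mul (sa_mul a b) c;
  sa_mul1l : forall a, sa_mul sa_one a = a;
  sa_mul1r : forall a, sa_mul a sa_one = a;
  sa_mullin : forall (c : C) a b x,
      sa_mul (c *: a + b) x = c *: sa_mul a x + sa_mul b x;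
  sa_mulrlin : forall (c : C) a b x,
      sa_mul x (c *: a + b) = c *: sa_mul x a + sa_mul x b;
  sa_starD : forall a b, sa_star (a + b) = sa_star a + sa_star b;
  sa_starZ : forall (c : C) a, sa_star (c *: a) = c^* *: sa_star a;
  sa_starM : forall a b, sa_star (sa_mul a b) = sa_mul (sa_star b) (sa_star a);
  sa_starK : forall a, sa_star (sa_star a) = a }.

Arguments sa_mul {s}.
Arguments sa_one {s}.
Arguments sa_star {s}.

Definition is_starhom (A B : starAlg) (f : A -> B) :=
  lin f /\ f sa_one = sa_one /\
  (forall a b, f (sa_mul a b) = sa_mul (f a) (f b)) /\
  (forall a, f (sa_star a) = sa_star (f a)).

Lemma unit_mullin (c : C) (a b x : C^o) :
  (c *: a + b) * x = c *: (a * x : C^o) + (b * x : C^o).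
Proof. by rewrite mulrDl /GRing.scale /= mulrA. Qed.
Lemma unit_mulrlin (c : C) (a b x : C^o) :
  x * (c *: a + b) = c *: (x * a : C^o) + (x * b : C^o).
Proof. by rewrite mulrDr /GRing.scale /= mulrCA. Qed.
Lemma unit_starD (a b : C^o) : (a + b : C)^* = (a : C)^* + (b : C)^*.
Proof. exact: rmorphD. Qed.
Lemma unit_starZ (c : C) (a : C^o) : ((c *: a : C^o) : C)^* = c^* *: ((a : C)^* : C^o).
Proof. by rewrite /GRing.scale /= rmorphM. Qed.
Lemma unit_starM (a b : C^o) : ((a * b : C)^*) = (b : C)^* * (a : C)^*.
Proof. by rewrite rmorphM mulrC. Qed.
Lemma unit_starK (a : C^o) : ((a : C)^*)^* = a.
Proof. exact: conjCK. Qed.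

Definition unitAlg : starAlg :=
  @StarAlg C^o (fun x y : C^o => (x * y : C)) (1 : C) (fun z : C^o => (z : C)^*)
    (@mulrA C) (@mul1r C) (@mulr1 C) unit_mullin unit_mulrlin
    unit_starD unit_starZ unit_starM unit_starK.

Definition unit_state (z : unitAlg) : C := z.

Definition is_state (A : starAlg) (phi : A -> C) :=
  lfun phi /\ forall a, phi (sa_star a) = (phi a)^*.

(* A^perp : radical of <a,b>_phi = phi (b^* a) *)
Definition perp (A : starAlg) (phi : A -> C) (a : A) : Prop :=
  forall b, phi (sa_mul (sa_star b) a) = 0.

Definition admissible (A B : starAlg) (phi : A -> C) (f : B -> A) :=
  forall b, perp (phi \o f) b -> perp phi (f b).

(* morphism (A,phi) -> (B,psi) of Phys : a *-homomorphism f : B -> A *)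
Definition phys_mor (A : starAlg) (phi : A -> C) (B : starAlg) (psi : B -> C)
  (f : B -> A) :=
  is_starhom f /\ (forall b, phi (f b) = psi b) /\ admissible phi f.

(* (A, phi) (x) (B, psi) = (T, chi): T an algebraic tensor product of
   *-algebras, chi = phi (x) psi *)
Definition is_alg_tensor (A B T : starAlg) (t : A -> B -> T) :=
  is_tensor t /\
  (forall a b a' b', sa_mul (t a b) (t a' b') = t (sa_mul a a') (sa_mul b b')) /\
  sa_one = t sa_one sa_one /\
  (forall a b, sa_star (t a b) = t (sa_star a) (sa_star b)).

Definition is_state_tensor (A B T : starAlg) (t : A -> B -> T)
  (phi : A -> C) (psi : B -> C) (chi : T -> C) :=
  lfun chi /\ forall a b, chi (t a b) = phi a * psi b.

Definition is_starMod (A : starAlg) (M : lmodType C)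
  (form : M -> M -> C) (act : A -> M -> M) :=
  (forall z, lfun (fun x => form x z)) /\
  (forall x y, form y x = (form x y)^*) /\
  (forall x, (forall y, form x y = 0) -> x = 0) /\
  bilin act /\
  (forall a b m, act (sa_mul a b) m = act a (act b m)) /\
  (forall m, act sa_one m = m) /\
  (forall a m n, form (act a m) n = form m (act (sa_star a) n)).

Definition mod_mor (A : starAlg) (M : lmodType C) (fM : M -> M -> C)
  (aM : A -> M -> M) (B : starAlg) (N : lmodType C) (fN : N -> N -> C)
  (aN : B -> N -> N) (f : A -> B) (h : M -> N) :=
  is_starhom f /\ lin h /\ (forall x y, fN (h x) (h y) = fM x y) /\
  (forall a m, h (aM a m) = aN (f a) (h m)).

(* monoidal product in *Mod: (T, MN) with MN a tensor product of M, N,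
   form <m(x)n, m'(x)n'> = <m,m'><n,n'>, action (a(x)b)(m(x)n) = am (x) bn *)
Definition is_mod_tensor (A B T : starAlg) (t : A -> B -> T)
  (M : lmodType C) (fM : M -> M -> C) (aM : A -> M -> M)
  (N : lmodType C) (fN : N -> N -> C) (aN : B -> N -> N)
  (MN : lmodType C) (m : M -> N -> MN) (fMN : MN -> MN -> C) (aMN : T -> MN -> MN) :=
  is_tensor m /\
  (forall z, lfun (fun x => fMN x z)) /\
  (forall x (c : C) y z, fMN x (c *: y + z) = c^* * fMN x y + fMN x z) /\
  bilin aMN /\
  (forall x y x' y', fMN (m x y) (m x' y') = fM x x' * fN y y') /\
  (forall a b x y, aMN (t a b) (m x y) = m (aM a x) (aN b y)).

Definition unit_form (z w : C^o) : C := z * w^*.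
Definition unit_act (z : unitAlg) (w : C^o) : C^o := (z : C) * w.

(* (Q, pi) realizes GNS(phi) = A / A^perp : pi is the quotient map *)
Definition is_gns (A : starAlg) (phi : A -> C) (Q : lmodType C) (pi : A -> Q) :=
  lin pi /\ (forall q, exists a, pi a = q) /\ (forall a, pi a = 0 <-> perp phi a).

Definition rep (A : starAlg) (Q : Type) (pi : A -> Q) (q : Q) : A :=
  epsilon (inhabits 0) (fun a => pi a = q).

Definition gns_form (A : starAlg) (phi : A -> C) (Q : lmodType C) (pi : A -> Q)
  (x y : Q) : C := phi (sa_mul (sa_star (rep pi y)) (rep pi x)).
Definition gns_act (A : starAlg) (Q : lmodType C) (pi : A -> Q) (a : A) (x : Q) : Q :=
  pi (sa_mul a (rep pi x)).

Definition gns_map (A B : starAlg) (QA QB : lmodType C) (piA : A -> QA)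
  (piB : B -> QB) (f : B -> A) (x : QB) : QA := piA (f (rep piB x)).

Definition gns_cmp (A B T : starAlg) (t : A -> B -> T) (QA QB QT V : lmodType C)
  (piA : A -> QA) (piB : B -> QB) (piT : T -> QT) (m : QA -> QB -> V)
  (h : QT -> V) := lin h /\ forall a b, h (piT (t a b)) = m (piA a) (piB b).

Definition GNS_objects :=
  forall (A : starAlg) (phi : A -> C) (Q : lmodType C) (pi : A -> Q),
    is_state phi -> is_gns phi pi ->
    is_starMod (gns_form phi pi) (gns_act pi) /\
    (forall a b, gns_form phi pi (pi a) (pi b) = phi (sa_mul (sa_star b) a)) /\
    (forall a b, gns_act pi a (pi b) = pi (sa_mul a b)).

Definition GNS_morphisms :=
  forall (A : starAlg) (phi : A -> C) (B : starAlg) (psi : B -> C) (f : B -> A)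
    (QA QB : lmodType C) (piA : A -> QA) (piB : B -> QB),
    is_state phi -> is_state psi -> is_gns phi piA -> is_gns psi piB ->
    phys_mor phi psi f ->
    (forall x, gns_map piA piB f (piB x) = piA (f x)) /\
    mod_mor (gns_form psi piB) (gns_act piB) (gns_form phi piA) (gns_act piA)
      f (gns_map piA piB f).

Definition GNS_functorial :=
  (forall (A : starAlg) (phi : A -> C) (Q : lmodType C) (pi : A -> Q),
    is_state phi -> is_gns phi pi -> forall x, gns_map pi pi id x = x) /\
  (forall (A : starAlg) (phi : A -> C) (B : starAlg) (psi : B -> C)
    (D : starAlg) (om : D -> C) (f : B -> A) (g : D -> B)
    (QA QB QD : lmodType C) (piA : A -> QA) (piB : B -> QB) (piD : D -> QD),
    is_state phi -> is_state psi -> is_state om ->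
    is_gns phi piA -> is_gns psi piB -> is_gns om piD ->
    phys_mor phi psi f -> phys_mor psi om g ->
    forall x, gns_map piA piD (f \o g) x = gns_map piA piB f (gns_map piB piD g x)).

Definition GNS_tensor_iso :=
  forall (A B T : starAlg) (t : A -> B -> T) (phi : A -> C) (psi : B -> C)
    (chi : T -> C) (QA QB QT : lmodType C) (piA : A -> QA) (piB : B -> QB)
    (piT : T -> QT) (V : lmodType C) (m : QA -> QB -> V)
    (fV : V -> V -> C) (aV : T -> V -> V),
    is_state phi -> is_state psi -> is_alg_tensor t ->
    is_state_tensor t phi psi chi ->
    is_gns phi piA -> is_gns psi piB -> is_gns chi piT ->
    is_mod_tensor t (gns_form phi piA) (gns_act piA) (gns_form psi piB)
      (gns_act piB) m fV aV ->
    exists h : QT -> V,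
      gns_cmp t piA piB piT m h /\
      mod_mor (gns_form chi piT) (gns_act piT) fV aV id h /\ bijective h.

Definition GNS_tensor_natural :=
  forall (A B T A' B' T' : starAlg) (t : A -> B -> T) (t' : A' -> B' -> T')
    (phi : A -> C) (psi : B -> C) (chi : T -> C)
    (phi' : A' -> C) (psi' : B' -> C) (chi' : T' -> C)
    (f : A' -> A) (g : B' -> B) (fg : T' -> T)
    (QA QB QT QA' QB' QT' : lmodType C) (piA : A -> QA) (piB : B -> QB)
    (piT : T -> QT) (piA' : A' -> QA') (piB' : B' -> QB') (piT' : T' -> QT')
    (V V' : lmodType C) (m : QA -> QB -> V) (m' : QA' -> QB' -> V')
    (h : QT -> V) (h' : QT' -> V') (k : V' -> V),
    is_state phi -> is_state psi -> is_state phi' -> is_state psi' ->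
    is_alg_tensor t -> is_alg_tensor t' ->
    is_state_tensor t phi psi chi -> is_state_tensor t' phi' psi' chi' ->
    phys_mor phi phi' f -> phys_mor psi psi' g ->
    tensor_map t' t f g fg -> phys_mor chi chi' fg ->
    is_gns phi piA -> is_gns psi piB -> is_gns chi piT ->
    is_gns phi' piA' -> is_gns psi' piB' -> is_gns chi' piT' ->
    is_tensor m -> is_tensor m' ->
    gns_cmp t piA piB piT m h -> gns_cmp t' piA' piB' piT' m' h' ->
    tensor_map m' m (gns_map piA piA' f) (gns_map piB piB' g) k ->
    forall x, h (gns_map piT piT' fg x) = k (h' x).

Definition GNS_unit :=
  forall (QI : lmodType C) (piI : unitAlg -> QI),
    is_gns unit_state piI ->
    exists e : QI -> C^o,
      (forall z, e (piI z) = z) /\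
      mod_mor (gns_form unit_state piI) (gns_act piI) unit_form unit_act id e /\
      bijective e.

Definition GNS_assoc :=
  forall (A B D TAB TBD T1 T2 : starAlg)
    (phi : A -> C) (psi : B -> C) (om : D -> C)
    (tAB : A -> B -> TAB) (tBD : B -> D -> TBD)
    (t1 : TAB -> D -> T1) (t2 : A -> TBD -> T2)
    (chiAB : TAB -> C) (chiBD : TBD -> C) (chi1 : T1 -> C) (chi2 : T2 -> C)
    (al : T1 -> T2)
    (QA QB QD QAB QBD Q1 Q2 : lmodType C)
    (piA : A -> QA) (piB : B -> QB) (piD : D -> QD) (piAB : TAB -> QAB)
    (piBD : TBD -> QBD) (pi1 : T1 -> Q1) (pi2 : T2 -> Q2)
    (VAB VBD V1 V2 W1 W2 : lmodType C)
    (mAB : QA -> QB -> VAB) (mBD : QB -> QD -> VBD)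
    (m1 : VAB -> QD -> V1) (m2 : QA -> VBD -> V2)
    (n1 : QAB -> QD -> W1) (n2 : QA -> QBD -> W2)
    (hAB : QAB -> VAB) (hBD : QBD -> VBD) (h1 : Q1 -> W1) (h2 : Q2 -> W2)
    (hid : W1 -> V1) (idh : W2 -> V2) (alM : V1 -> V2),
    is_state phi -> is_state psi -> is_state om ->
    is_alg_tensor tAB -> is_alg_tensor tBD -> is_alg_tensor t1 -> is_alg_tensor t2 ->
    is_state_tensor tAB phi psi chiAB -> is_state_tensor tBD psi om chiBD ->
    is_state_tensor t1 chiAB om chi1 -> is_state_tensor t2 phi chiBD chi2 ->
    lin al -> (forall a b d, al (t1 (tAB a b) d) = t2 a (tBD b d)) ->
    phys_mor chi2 chi1 al ->
    is_gns phi piA -> is_gns psi piB -> is_gns om piD -> is_gns chiAB piAB ->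
    is_gns chiBD piBD -> is_gns chi1 pi1 -> is_gns chi2 pi2 ->
    is_tensor mAB -> is_tensor mBD -> is_tensor m1 -> is_tensor m2 ->
    is_tensor n1 -> is_tensor n2 ->
    gns_cmp tAB piA piB piAB mAB hAB -> gns_cmp tBD piB piD piBD mBD hBD ->
    gns_cmp t1 piAB piD pi1 n1 h1 -> gns_cmp t2 piA piBD pi2 n2 h2 ->
    tensor_map n1 m1 hAB id hid -> tensor_map n2 m2 id hBD idh ->
    lin alM -> (forall x y z, alM (m1 (mAB x y) z) = m2 x (mBD y z)) ->
    forall x, idh (h2 (gns_map pi2 pi1 al x)) = alM (hid (h1 x)).

Definition GNS_unitors :=
  (forall (A T : starAlg) (phi : A -> C) (t : unitAlg -> A -> T) (chi : T -> C)
    (lam : T -> A) (QI QA QT V W : lmodType C) (piI : unitAlg -> QI)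
    (piA : A -> QA) (piT : T -> QT) (m : QI -> QA -> V) (n : C^o -> QA -> W)
    (h : QT -> V) (e : QI -> C^o) (eid : V -> W) (lamM : W -> QA),
    is_state phi -> is_alg_tensor t -> is_state_tensor t unit_state phi chi ->
    lin lam -> (forall z a, lam (t z a) = (z : C) *: a) -> phys_mor phi chi lam ->
    is_gns unit_state piI -> is_gns phi piA -> is_gns chi piT ->
    is_tensor m -> is_tensor n -> gns_cmp t piI piA piT m h ->
    lin e -> (forall z, e (piI z) = z) -> tensor_map m n e id eid ->
    lin lamM -> (forall (z : C) x, lamM (n z x) = z *: x) ->
    forall x, lamM (eid (h x)) = gns_map piA piT lam x) /\
  (forall (A T : starAlg) (phi : A -> C) (t : A -> unitAlg -> T) (chi : T -> C)
    (rho : T -> A) (QI QA QT V W : lmodType C) (piI : unitAlg -> QI)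
    (piA : A -> QA) (piT : T -> QT) (m : QA -> QI -> V) (n : QA -> C^o -> W)
    (h : QT -> V) (e : QI -> C^o) (ide : V -> W) (rhoM : W -> QA),
    is_state phi -> is_alg_tensor t -> is_state_tensor t phi unit_state chi ->
    lin rho -> (forall a z, rho (t a z) = (z : C) *: a) -> phys_mor phi chi rho ->
    is_gns unit_state piI -> is_gns phi piA -> is_gns chi piT ->
    is_tensor m -> is_tensor n -> gns_cmp t piA piI piT m h ->
    lin e -> (forall z, e (piI z) = z) -> tensor_map m n id e ide ->
    lin rhoM -> (forall x (z : C), rhoM (n x z) = z *: x) ->
    forall x, rhoM (ide (h x)) = gns_map piA piT rho x).

Definition GNS_symmetry :=
  forall (A B T T' : starAlg) (phi : A -> C) (psi : B -> C)
    (t : A -> B -> T) (t' : B -> A -> T') (chi : T -> C) (chi' : T' -> C)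
    (s : T' -> T) (QA QB QT QT' V V' : lmodType C)
    (piA : A -> QA) (piB : B -> QB) (piT : T -> QT) (piT' : T' -> QT')
    (m : QA -> QB -> V) (m' : QB -> QA -> V') (h : QT -> V) (h' : QT' -> V')
    (sM : V' -> V),
    is_state phi -> is_state psi -> is_alg_tensor t -> is_alg_tensor t' ->
    is_state_tensor t phi psi chi -> is_state_tensor t' psi phi chi' ->
    lin s -> (forall b a, s (t' b a) = t a b) -> phys_mor chi chi' s ->
    is_gns phi piA -> is_gns psi piB -> is_gns chi piT -> is_gns chi' piT' ->
    is_tensor m -> is_tensor m' ->
    gns_cmp t piA piB piT m h -> gns_cmp t' piB piA piT' m' h' ->
    lin sM -> (forall y x, sM (m' y x) = m x y) ->
    forall x, h (gns_map piT piT' s x) = sM (h' x).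

End StarDefs.

(** The radical [A^perp] of [<a, b> = phi (b^* a)] is a left ideal, since
    [phi (b^* (x a)) = phi ((x^* b)^* a)], and by hermitian symmetry it is
    also the radical on the other side; hence the form and left multiplication
    descend to [A / A^perp].  Admissibility of a morphism [f] is exactly what
    makes [[x] |-> [f x]] well defined.  The coherence conditions are
    equalities between linear maps out of algebraic tensor products, hence
    are checked on pure tensors.  For the monoidal comparison, the universal
    map [A (x) B -> GNS phi (x) GNS psi], [a (x) b |-> [a] (x) [b]], carries
    the form of [phi (x) psi] to the tensor form, which is nondegenerate: a
    tensor is a finite sum of pure tensors, and a sum orthogonal to all pure
    tensors collapses term by term against the nondegenerate factors.  So the
    map kills [(A (x) B)^perp] and descends; its inverse
    [[a] (x) [b] |-> [a (x) b]] is well defined because [A^perp (x) B] and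
    [A (x) B^perp] lie in [(A (x) B)^perp]. *)
From HB Require Import structures.
From mathcomp Require Import all_boot all_order all_algebra.
From mathcomp Require Import reals complex boolp.
From Stdlib Require Import ClassicalEpsilon.
Set Implicit Arguments. Unset Strict Implicit. Unset Printing Implicit Defensive.
Import Order.TTheory GRing.Theory Num.Theory.
Local Open Scope ring_scope.

Section Linear.
Variable C : numClosedFieldType.

Section LinearMap.
Variables (V W : lmodType C) (f : V -> W).
Hypothesis f_lin : lin f.

Lemma linD x y : f (x + y) = f x + f y.
Proof. by have := f_lin 1 x y; rewrite !scale1r. Qed.

Lemma lin0 : f 0 = 0.
Proof. by have /eqP := linD 0 0; rewrite addr0 -subr_eq subrr eq_sym => /eqP. Qed.

Lemma linZ c x : f (c *: x) = c *: f x.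
Proof. by have := f_lin c x 0; rewrite !addr0 lin0 addr0. Qed.

Lemma linN x : f (- x) = - f x.
Proof. by rewrite -scaleN1r linZ scaleN1r. Qed.

Lemma linB x y : f (x - y) = f x - f y.
Proof. by rewrite linD linN. Qed.

Lemma lin_sum (I : Type) (s : seq I) (F : I -> V) :
  f (\sum_(i <- s) F i) = \sum_(i <- s) f (F i).
Proof.
elim: s => [|i s IHs]; first by rewrite !big_nil lin0.
by rewrite !big_cons linD IHs.
Qed.

End LinearMap.

Lemma lfun_lin (V : lmodType C) (f : V -> C) : lfun f -> @lin C V C^o f.
Proof. by []. Qed.

Lemma lin_comp (U V W : lmodType C) (f : V -> W) (g : U -> V) :
  lin f -> lin g -> lin (f \o g).
Proof. by move=> f_lin g_lin c x y /=; rewrite g_lin f_lin. Qed.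

Lemma bilin_comp (U V W X : lmodType C) (t : U -> V -> W) (h : W -> X) :
  bilin t -> lin h -> bilin (fun u v => h (t u v)).
Proof.
by move=> [tl tr] h_lin; split=> [v c u u'|u c v v'] /=; rewrite ?tl ?tr h_lin.
Qed.

End Linear.

Section StarAlgebra.
Variables (C : numClosedFieldType) (A : starAlg C).

Lemma mull_lin (x : A) : lin (fun a : A => sa_mul a x).
Proof. by move=> c a b; rewrite sa_mullin. Qed.

Lemma mulr_lin (x : A) : lin (fun a : A => sa_mul x a).
Proof. by move=> c a b; rewrite sa_mulrlin. Qed.

Lemma sa_mulBl (x y z : A) : sa_mul (x - y) z = sa_mul x z - sa_mul y z.
Proof. exact: (linB (mull_lin z)). Qed.

Lemma sa_mulBr (x y z : A) : sa_mul z (x - y) = sa_mul z x - sa_mul z y.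
Proof. exact: (linB (mulr_lin z)). Qed.

Lemma sa_star0 : sa_star (0 : A) = 0.
Proof. by have := sa_starZ 0 (0 : A); rewrite conjC0 !scale0r. Qed.

Lemma sa_starB (x y : A) : sa_star (x - y) = sa_star x - sa_star y.
Proof.
suff starN : sa_star (- y) = - sa_star y by rewrite sa_starD starN.
by apply/eqP; rewrite -addr_eq0 -sa_starD addNr sa_star0.
Qed.

Lemma sa_starlin (c : C) (x y : A) :
  sa_star (c *: x + y) = c^* *: sa_star x + sa_star y.
Proof. by rewrite sa_starD sa_starZ. Qed.

Lemma sa_star_mulC (a b : A) : sa_mul (sa_star b) a = sa_star (sa_mul (sa_star a) b).
Proof. by rewrite sa_starM sa_starK. Qed.

Lemma state_conj_lin (chi : A -> C) (u : A) :
  lfun chi -> lin (fun v => (chi (sa_mul (sa_star v) u))^* : C^o).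
Proof.
by move=> chi_lin c v v' /=; rewrite sa_starlin mull_lin chi_lin rmorphD rmorphM /= conjCK.
Qed.

Lemma is_starhom_comp (B D : starAlg C) (f : B -> A) (g : D -> B) :
  is_starhom f -> is_starhom g -> is_starhom (f \o g).
Proof.
move=> [fl [f1 [fM fS]]] [gl [g1 [gM gS]]]; split; first exact: lin_comp.
by split; [rewrite /= g1 f1 | split=> [a b|a] /=; rewrite ?gM ?fM ?gS ?fS].
Qed.

End StarAlgebra.

Section TensorExt.
Variables (C : numClosedFieldType) (V W T : lmodType C) (t : V -> W -> T).
Hypothesis t_tensor : is_tensor t.

Lemma tensor_ext (U : lmodType C) (h1 h2 : T -> U) :
  lin h1 -> lin h2 -> (forall v w, h1 (t v w) = h2 (t v w)) -> h1 =1 h2.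
Proof.
move=> l1 l2 e x; have [tb uni] := t_tensor.
have [h0 [_ h0_uniq]] := uni U _ (bilin_comp tb l1).
have <- := h0_uniq h1 (conj l1 (fun _ _ => erefl)).
by have <- := h0_uniq h2 (conj l2 (fun v w => esym (e v w))).
Qed.

Lemma tensor_ext_conj (h1 h2 : T -> C) :
  lin (fun x => (h1 x)^* : C^o) -> lin (fun x => (h2 x)^* : C^o) ->
  (forall v w, h1 (t v w) = h2 (t v w)) -> h1 =1 h2.
Proof.
move=> l1 l2 e x; rewrite -[h1 x]conjCK -[h2 x]conjCK; congr (_^*).
by apply: (tensor_ext l1 l2 _ x) => v w /=; rewrite e.
Qed.

Lemma tensor_linl (w : W) : lin (fun v => t v w).
Proof. by case: t_tensor => -[]. Qed.

Lemma tensor_linr (v : V) : lin (t v).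
Proof. by case: t_tensor => -[]. Qed.

End TensorExt.

Definition sum_of_pure (C : numClosedFieldType) (V W T : lmodType C)
  (t : V -> W -> T) : pred T :=
  fun x => `[< exists s : seq (V * W), x = \sum_(p <- s) t p.1 p.2 >].

Lemma sum_of_pure_submod_closed (C : numClosedFieldType) (V W T : lmodType C)
  (t : V -> W -> T) :
  (forall v, lin (t v)) -> GRing.subsemimod_closed (sum_of_pure t).
Proof.
move=> tr; apply: GRing.submod_closed_semi; split.
  by apply/asboolP; exists [::]; rewrite big_nil.
move=> c _ _ /asboolP[s ->] /asboolP[s' ->]; apply/asboolP.
exists ([seq (p.1, c *: p.2) | p <- s] ++ s').
rewrite big_cat big_map /= scaler_sumr; congr (_ + _).
by apply: eq_bigr => p _; rewrite (linZ (tr _)).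
Qed.

(* The otherwise unused argument [tr] lets the submodule instance below be
   declared on this type. *)
Definition pure_span (C : numClosedFieldType) (V W T : lmodType C)
  (t : V -> W -> T) (tr : forall v, lin (t v)) := {x : T | sum_of_pure t x}.

Section PureSpan.
Variables (C : numClosedFieldType) (V W T : lmodType C) (t : V -> W -> T)
  (tr : forall v, lin (t v)).

HB.instance Definition _ :=
  GRing.isSubmodClosed.Build C T (sum_of_pure t) (sum_of_pure_submod_closed tr).
HB.instance Definition _ := [isSub for (@sval T (sum_of_pure t)) : pure_span tr -> T].
HB.instance Definition _ := [Choice of pure_span tr by <:].
HB.instance Definition _ := [SubChoice_isSubLmodule of pure_span tr by <:].

Lemma tensor_sum_of_pure : is_tensor t -> forall x, sum_of_pure t x.
Proof.
move=> t_tensor x.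
have pure v w : sum_of_pure t (t v w).
  by apply/asboolP; exists [:: (v, w)]; rewrite big_seq1.
pose g v w : pure_span tr := exist _ (t v w) (pure v w).
have g_bilin : bilin g.
  by split=> [w c v v'|v c w w']; apply: val_inj;
    rewrite /= ?(tensor_linl t_tensor) ?(tensor_linr t_tensor).
have [h [[h_lin h_pure] _]] := t_tensor.2 _ g g_bilin.
suff <- : val (h x) = x by exact: valP.
apply: (@tensor_ext _ _ _ _ _ t_tensor _ (fun y => val (h y)) id) => //.
  by move=> c y z /=; rewrite h_lin.
by move=> v w /=; rewrite h_pure.
Qed.

End PureSpan.

Section NondegenerateTensorForm.
Variables (C : numClosedFieldType) (QA QB V : lmodType C)
  (fA : QA -> QA -> C) (fB : QB -> QB -> C) (m : QA -> QB -> V).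
Hypotheses (fA_lin : forall z, lfun (fun x => fA x z))
  (fA_nondeg : forall x, (forall y, fA x y = 0) -> x = 0)
  (m_bilin : bilin m).

(* Eliminate the first term against a vector [x0] not orthogonal to its left
   factor, and recurse on the remaining (shorter) sum. *)
Lemma sum_pure_eq0 (s : seq (QA * QB)) :
  (forall x, \sum_(p <- s) fA p.1 x *: p.2 = 0) -> \sum_(p <- s) m p.1 p.2 = 0.
Proof.
have [ml mr] := m_bilin.
have [n] := ubnP (size s); elim: n s => // n IHn [|p s] /=; first by rewrite big_nil.
rewrite ltnS => size_s hs; rewrite big_cons.
case: (pselect (forall x, fA p.1 x = 0)) => [p1_0|/existsNP[x0 /eqP c_neq0]].
  rewrite (fA_nondeg p1_0) (lin0 (ml _)) add0r; apply: IHn => // x.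
  by have := hs x; rewrite big_cons p1_0 scale0r add0r.
set c := fA p.1 x0 in c_neq0.
pose k (q : QA * QB) := fA q.1 x0 / c.
pose X := \sum_(q <- s) k q *: q.2.
have X_def : X = - p.2.
  have : \sum_(q <- s) fA q.1 x0 *: q.2 = - (c *: p.2).
    by apply/eqP; rewrite -addr_eq0 addrC; have := hs x0; rewrite big_cons => ->.
  rewrite [X](_ : _ = c^-1 *: \sum_(q <- s) fA q.1 x0 *: q.2) => [->|].
    by rewrite scalerN scalerA mulVf // scale1r.
  by rewrite scaler_sumr; apply: eq_bigr => q _; rewrite scalerA mulrC.
pose s' := [seq (q.1 - k q *: p.1, q.2) | q <- s].
have sum_s' : \sum_(q <- s') m q.1 q.2 = \sum_(q <- s) m q.1 q.2 - m p.1 X.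
  rewrite big_map /= (lin_sum (mr _)) -sumrB; apply: eq_bigr => q _.
  by rewrite (linB (ml _)) (linZ (ml _)) (linZ (mr _)).
rewrite X_def (linN (mr _)) opprK addrC in sum_s'.
rewrite -sum_s'; apply: IHn; first by rewrite size_map.
move=> x; rewrite big_map /=.
have fA_lin_x := lfun_lin (fA_lin x).
rewrite (eq_bigr (fun q => fA q.1 x *: q.2 - k q *: (fA p.1 x *: q.2))); last first.
  by move=> q _; rewrite (linB fA_lin_x) (linZ fA_lin_x) scalerBl scalerA.
rewrite sumrB (_ : \sum_(q <- s) k q *: (fA p.1 x *: q.2) = fA p.1 x *: X); last first.
  by rewrite scaler_sumr; apply: eq_bigr => q _; rewrite !scalerA mulrC.
by rewrite X_def scalerN opprK addrC; have := hs x; rewrite big_cons.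
Qed.

Variables (fV : V -> V -> C).
Hypotheses (fB_lin : forall z, lfun (fun x => fB x z))
  (fB_nondeg : forall x, (forall y, fB x y = 0) -> x = 0)
  (m_tensor : is_tensor m) (fV_lin : forall z, lfun (fun x => fV x z))
  (fV_pure : forall x y x' y', fV (m x y) (m x' y') = fA x x' * fB y y').

Lemma tensor_form_nondeg w : (forall x y, fV w (m x y) = 0) -> w = 0.
Proof.
move=> w_orth; have /asboolP[s w_sum] := tensor_sum_of_pure m_bilin.2 m_tensor w.
rewrite w_sum; apply: sum_pure_eq0 => x; apply: fB_nondeg => y.
apply: etrans (w_orth x y); rewrite (lin_sum (lfun_lin (fB_lin _))) w_sum.
rewrite (lin_sum (lfun_lin (fV_lin _))); apply: eq_bigr => p _.
by rewrite fV_pure (linZ (lfun_lin (fB_lin _))).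
Qed.

End NondegenerateTensorForm.

Section GNSQuotient.
Variables (C : numClosedFieldType) (A : starAlg C) (phi : A -> C)
  (Q : lmodType C) (pi : A -> Q).
Hypothesis pi_gns : is_gns phi pi.

Lemma gns_lin : lin pi. Proof. by case: pi_gns. Qed.
Lemma gns_surj q : exists a, pi a = q. Proof. by case: pi_gns => _ []. Qed.
Lemma gns_eq0P a : pi a = 0 <-> perp phi a. Proof. by case: pi_gns => _ []. Qed.

Lemma gns_eqP a b : pi a = pi b <-> perp phi (a - b).
Proof.
rewrite -gns_eq0P (linB gns_lin); split=> [->|/eqP]; first by rewrite subrr.
by rewrite subr_eq0 => /eqP.
Qed.

Lemma repK q : pi (rep pi q) = q.
Proof. exact: (epsilon_spec _ (fun a => pi a = q) (gns_surj q)). Qed.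

Lemma rep_perp a : perp phi (rep pi (pi a) - a).
Proof. by apply/gns_eqP; rewrite repK. Qed.

Lemma perp_mull x a : perp phi a -> perp phi (sa_mul x a).
Proof. by move=> a_perp b; rewrite sa_mulA -[sa_mul _ x]sa_starK sa_starM sa_starK. Qed.

Hypothesis phi_state : is_state phi.

Lemma state_lin : @lin C A C^o phi. Proof. by case: phi_state. Qed.
Lemma state_star a : phi (sa_star a) = (phi a)^*. Proof. by case: phi_state. Qed.

Lemma perp_form_l a b : perp phi a -> phi (sa_mul (sa_star a) b) = 0.
Proof. by move=> a_perp; rewrite sa_star_mulC state_star a_perp conjC0. Qed.

Lemma gns_form_pi a b : gns_form phi pi (pi a) (pi b) = phi (sa_mul (sa_star b) a).
Proof.
rewrite /gns_form; set a' := rep pi (pi a); set b' := rep pi (pi b).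
have -> : sa_mul (sa_star b') a' =
    sa_mul (sa_star b') (a' - a) + sa_mul (sa_star (b' - b)) a + sa_mul (sa_star b) a.
  by rewrite sa_mulBr sa_starB sa_mulBl addrA subrK subrK.
rewrite !(linD state_lin) rep_perp perp_form_l; last exact: rep_perp.
by rewrite /= !add0r.
Qed.

Lemma gns_act_pi a b : gns_act pi a (pi b) = pi (sa_mul a b).
Proof. by apply/gns_eqP; rewrite -sa_mulBr; apply/perp_mull/rep_perp. Qed.

End GNSQuotient.

Lemma gns_objects (C : numClosedFieldType) : GNS_objects C.
Proof.
move=> A phi Q pi phi_state pi_gns.
have pi_lin := gns_lin pi_gns; have surj := gns_surj pi_gns.
have form := gns_form_pi pi_gns phi_state; have act := gns_act_pi pi_gns.
split; last by [].
split.
  move=> z c x y; have [a <-] := surj x; have [b <-] := surj y.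
  have [d <-] := surj z.
  by rewrite /= -pi_lin !form mulr_lin (state_lin phi_state).
split.
  move=> x y; have [a <-] := surj x; have [b <-] := surj y.
  by rewrite !form -state_star // -sa_star_mulC.
split.
  move=> x x_orth; have [a a_x] := surj x; rewrite -a_x.
  by apply/(gns_eq0P pi_gns) => b; rewrite -form a_x x_orth.
split.
  split=> [v c u u'|u c v v'].
    by have [b <-] := surj v; rewrite /= !act mull_lin pi_lin.
  have [b <-] := surj v; have [b' <-] := surj v'.
  by rewrite -pi_lin !act mulr_lin pi_lin.
split; first by move=> a b x; have [d <-] := surj x; rewrite !act sa_mulA.
split; first by move=> x; have [d <-] := surj x; rewrite act sa_mul1l.
move=> a x y; have [b <-] := surj x; have [d <-] := surj y.
by rewrite !act !form sa_starM sa_starK sa_mulA.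
Qed.

Section GNSMap.
Variable C : numClosedFieldType.

Lemma gns_map_pi (A : starAlg C) (phi : A -> C) (B : starAlg C) (psi : B -> C)
    (f : B -> A) (QA QB : lmodType C) (piA : A -> QA) (piB : B -> QB) :
  is_gns phi piA -> is_gns psi piB -> phys_mor phi psi f ->
  forall x, gns_map piA piB f (piB x) = piA (f x).
Proof.
move=> hA hB [[f_lin _] [f_phi f_adm]] x; apply/(gns_eqP hA).
rewrite -(linB f_lin); apply: f_adm => b /=; rewrite f_phi.
exact: (rep_perp hB).
Qed.

Lemma gns_morphisms : GNS_morphisms C.
Proof.
move=> A phi B psi f QA QB piA piB sA sB hA hB f_mor.
have map_pi := gns_map_pi hA hB f_mor.
split=> //; have [[f_lin [_ [fM fS]]] [f_phi _]] := f_mor.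
have surj := gns_surj hB.
split; first by case: f_mor.
split.
  move=> c x y; have [a <-] := surj x; have [b <-] := surj y.
  by rewrite -(gns_lin hB) !map_pi f_lin (gns_lin hA).
split.
  move=> x y; have [a <-] := surj x; have [b <-] := surj y.
  by rewrite !map_pi !gns_form_pi // -fS -fM f_phi.
move=> a x; have [b <-] := surj x.
by rewrite (gns_act_pi hB) !map_pi (gns_act_pi hA) fM.
Qed.

Lemma phys_mor_comp (A B D : starAlg C) (phi : A -> C) (psi : B -> C)
    (om : D -> C) (f : B -> A) (g : D -> B) :
  phys_mor phi psi f -> phys_mor psi om g -> phys_mor phi om (f \o g).
Proof.
move=> [f_hom [f_phi f_adm]] [g_hom [g_psi g_adm]].
split; first exact: is_starhom_comp.
split=> [d|d d_perp] /=; first by rewrite f_phi g_psi.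
apply: f_adm => b /=; rewrite f_phi; move: b.
by apply: g_adm => d' /=; rewrite -f_phi; exact: d_perp.
Qed.

Lemma gns_functorial : GNS_functorial C.
Proof.
split=> [A phi Q pi _ pi_gns x|]; first exact: (repK pi_gns).
move=> A phi B psi D om f g QA QB QD piA piB piD _ _ _ hA hB hD f_mor g_mor x.
have [d <-] := gns_surj hD x.
rewrite (gns_map_pi hB hD g_mor) (gns_map_pi hA hB f_mor).
by rewrite (gns_map_pi hA hD (phys_mor_comp f_mor g_mor)).
Qed.

End GNSMap.

Section Coherence.
Variable C : numClosedFieldType.

Lemma gns_tensor_natural : GNS_tensor_natural C.
Proof.
move=> A B T A' B' T' t t' phi psi chi phi' psi' chi' f g fg QA QB QT QA' QB' QT'
  piA piB piT piA' piB' piT' V V' m m' h h' k _ _ _ _ _ [t'_tensor _] _ _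
  f_mor g_mor [fg_lin fg_pure] fg_mor hA hB hT hA' hB' hT' _ _ [h_lin h_pure]
  [h'_lin h'_pure] [k_lin k_pure] x.
have [u <-] := gns_surj hT' x; rewrite (gns_map_pi hT hT' fg_mor).
apply: (@tensor_ext _ _ _ _ _ t'_tensor _ (fun u => h (piT (fg u)))
  (fun u => k (h' (piT' u)))).
- exact: (lin_comp h_lin (lin_comp (gns_lin hT) fg_lin)).
- exact: (lin_comp k_lin (lin_comp h'_lin (gns_lin hT'))).
move=> a b; rewrite /= fg_pure h_pure h'_pure k_pure.
by rewrite (gns_map_pi hA hA' f_mor) (gns_map_pi hB hB' g_mor).
Qed.

Lemma gns_symmetry : GNS_symmetry C.
Proof.
move=> A B T T' phi psi t t' chi chi' s QA QB QT QT' V V' piA piB piT piT'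
  m m' h h' sM _ _ _ [t'_tensor _] _ _ s_lin s_pure s_mor _ _ hT hT' _ _
  [h_lin h_pure] [h'_lin h'_pure] sM_lin sM_pure x.
have [u <-] := gns_surj hT' x; rewrite (gns_map_pi hT hT' s_mor).
apply: (@tensor_ext _ _ _ _ _ t'_tensor _ (fun u => h (piT (s u)))
  (fun u => sM (h' (piT' u)))).
- exact: (lin_comp h_lin (lin_comp (gns_lin hT) s_lin)).
- exact: (lin_comp sM_lin (lin_comp h'_lin (gns_lin hT'))).
by move=> b a; rewrite /= s_pure h_pure h'_pure sM_pure.
Qed.

Lemma gns_unitors : GNS_unitors C.
Proof.
split.
  move=> A T phi t chi lam QI QA QT V W piI piA piT m n h e eid lamM
    _ [t_tensor _] _ lam_lin lam_pure lam_mor _ hA hT _ _ [h_lin h_pure]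
    _ e_pi [eid_lin eid_pure] lamM_lin lamM_pure x.
  have [u <-] := gns_surj hT x; rewrite (gns_map_pi hA hT lam_mor).
  apply: (@tensor_ext _ _ _ _ _ t_tensor _ (fun u => lamM (eid (h (piT u))))
    (fun u => piA (lam u))).
  - exact: (lin_comp lamM_lin (lin_comp eid_lin (lin_comp h_lin (gns_lin hT)))).
  - exact: (lin_comp (gns_lin hA) lam_lin).
  move=> z a; rewrite /= h_pure eid_pure e_pi lamM_pure lam_pure.
  by rewrite (linZ (gns_lin hA)).
move=> A T phi t chi rho QI QA QT V W piI piA piT m n h e ide rhoM
  _ [t_tensor _] _ rho_lin rho_pure rho_mor _ hA hT _ _ [h_lin h_pure]
  _ e_pi [ide_lin ide_pure] rhoM_lin rhoM_pure x.
have [u <-] := gns_surj hT x; rewrite (gns_map_pi hA hT rho_mor).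
apply: (@tensor_ext _ _ _ _ _ t_tensor _ (fun u => rhoM (ide (h (piT u))))
  (fun u => piA (rho u))).
- exact: (lin_comp rhoM_lin (lin_comp ide_lin (lin_comp h_lin (gns_lin hT)))).
- exact: (lin_comp (gns_lin hA) rho_lin).
move=> a z; rewrite /= h_pure ide_pure e_pi rhoM_pure rho_pure.
by rewrite (linZ (gns_lin hA)).
Qed.

Lemma gns_assoc : GNS_assoc C.
Proof.
move=> A B D TAB TBD T1 T2 phi psi om tAB tBD t1 t2 chiAB chiBD chi1 chi2 al
  QA QB QD QAB QBD Q1 Q2 piA piB piD piAB piBD pi1 pi2 VAB VBD V1 V2 W1 W2
  mAB mBD m1 m2 n1 n2 hAB hBD h1 h2 hid idh alM
  _ _ _ [tAB_tensor _] _ [t1_tensor _] _ _ _ _ _ al_lin al_pure al_mor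
  _ _ _ _ _ g1 g2 _ _ _ _ _ _ [_ hAB_pure] [_ hBD_pure] [h1_lin h1_pure]
  [h2_lin h2_pure] [hid_lin hid_pure] [idh_lin idh_pure] alM_lin alM_pure x.
have [u <-] := gns_surj g1 x; rewrite (gns_map_pi g2 g1 al_mor).
have lhs_lin := lin_comp idh_lin (lin_comp h2_lin (lin_comp (gns_lin g2) al_lin)).
have rhs_lin := lin_comp alM_lin (lin_comp hid_lin (lin_comp h1_lin (gns_lin g1))).
apply: (tensor_ext t1_tensor lhs_lin rhs_lin) => w d.
apply: (@tensor_ext _ _ _ _ _ tAB_tensor _ (fun w => idh (h2 (pi2 (al (t1 w d)))))
  (fun w => alM (hid (h1 (pi1 (t1 w d)))))).
- exact: (lin_comp lhs_lin (tensor_linl t1_tensor d)).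
- exact: (lin_comp rhs_lin (tensor_linl t1_tensor d)).
by move=> a b /=; rewrite al_pure h2_pure idh_pure hBD_pure h1_pure hid_pure hAB_pure alM_pure.
Qed.

Lemma gns_unit : GNS_unit C.
Proof.
move=> QI piI hI.
have piI_inj z : piI z = 0 -> z = 0.
  by move/(gns_eq0P hI) => /(_ 1); rewrite /unit_state /= conjC1 mul1r.
have rep_piIK (z : unitAlg C) : rep piI (piI z) = z.
  by apply/eqP; rewrite -subr_eq0; apply/eqP/piI_inj/(gns_eq0P hI)/rep_perp.
exists (rep piI : QI -> C^o); split=> //.
split; last by exists piI => [x|z]; [exact: (repK hI) | exact: rep_piIK].
have surj := gns_surj hI.
split; first by split=> //; split.
split.
  move=> c x y; have [a <-] := surj x; have [b <-] := surj y.
  by rewrite -(gns_lin hI) !rep_piIK.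
split; first by move=> x y; rewrite /unit_form /gns_form /unit_state /= mulrC.
by move=> z x /=; have [a <-] := surj x; rewrite (gns_act_pi hI) !rep_piIK.
Qed.

End Coherence.

Section TensorState.
Variables (C : numClosedFieldType) (A B T : starAlg C) (t : A -> B -> T)
  (phi : A -> C) (psi : B -> C) (chi : T -> C).
Hypotheses (phi_state : is_state phi) (psi_state : is_state psi)
  (t_alg : is_alg_tensor t) (chi_tensor : is_state_tensor t phi psi chi).

Lemma state_tensor_is_state : is_state chi.
Proof.
have [[t_tensor [t_mul [_ t_star]]] [chi_lin chi_pure]] := (t_alg, chi_tensor).
split=> // w.
apply: (@tensor_ext_conj _ _ _ _ _ t_tensor (fun x => chi (sa_star x))
  (fun x => (chi x)^*) _ _ _ w).
- by move=> c x y /=; rewrite sa_starlin chi_lin rmorphD rmorphM /= conjCK.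
- by move=> c x y /=; rewrite !conjCK chi_lin.
by move=> a b /=; rewrite t_star !chi_pure rmorphM /= !state_star.
Qed.

Lemma perp_tensor_pure a b :
  (perp phi a \/ perp psi b) -> perp chi (t a b).
Proof.
have [[t_tensor [t_mul [_ t_star]]] [chi_lin chi_pure]] := (t_alg, chi_tensor).
move=> ab_perp v; have zero_lin : lin (fun _ : T => (0 : C)^* : C^o).
  by move=> c x y; rewrite conjC0 scaler0 addr0.
apply: (tensor_ext_conj t_tensor (state_conj_lin _ chi_lin) zero_lin) => a' b'.
rewrite t_star t_mul chi_pure.
by case: ab_perp => ->; rewrite ?mul0r ?mulr0.
Qed.

Variables (QA QB QT : lmodType C) (piA : A -> QA) (piB : B -> QB) (piT : T -> QT).
Hypotheses (hA : is_gns phi piA) (hB : is_gns psi piB) (hT : is_gns chi piT).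

Lemma gns_tensor_rep a b : piT (t (rep piA (piA a)) (rep piB (piB b))) = piT (t a b).
Proof.
have [[tl tr] _] := t_alg.1.
set a' := rep piA _; set b' := rep piB _.
apply/(gns_eqP hT).
have -> : t a' b' - t a b = t (a' - a) b' + t a (b' - b).
  by rewrite (linB (tl _)) (linB (tr _)) addrA subrK.
apply/(gns_eq0P hT); rewrite (linD (gns_lin hT)) !(proj2 (gns_eq0P hT _)) ?addr0 //.
all: apply: perp_tensor_pure; by [left; apply: rep_perp | right; apply: rep_perp].
Qed.

Lemma gns_tensor_rep_bilin : bilin (fun x y => piT (t (rep piA x) (rep piB y))).
Proof.
have [[tl tr] _] := t_alg.1.
split=> [y c x x'|x c y y']; rewrite -(gns_lin hT) -?tl -?tr; apply/(gns_eqP hT).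
  rewrite -(linB (tl _)); apply: perp_tensor_pure; left; apply/(gns_eqP hA).
  by rewrite (gns_lin hA) !(repK hA).
rewrite -(linB (tr _)); apply: perp_tensor_pure; right; apply/(gns_eqP hB).
by rewrite (gns_lin hB) !(repK hB).
Qed.

End TensorState.

Section TensorComparison.
Variables (C : numClosedFieldType) (A B T : starAlg C) (t : A -> B -> T)
  (phi : A -> C) (psi : B -> C) (chi : T -> C)
  (QA QB QT V : lmodType C) (piA : A -> QA) (piB : B -> QB) (piT : T -> QT)
  (m : QA -> QB -> V) (fV : V -> V -> C) (aV : T -> V -> V).
Hypotheses (phi_state : is_state phi) (psi_state : is_state psi)
  (t_alg : is_alg_tensor t) (chi_tensor : is_state_tensor t phi psi chi)
  (hA : is_gns phi piA) (hB : is_gns psi piB) (hT : is_gns chi piT)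
  (V_tensor : is_mod_tensor t (gns_form phi piA) (gns_act piA)
     (gns_form psi piB) (gns_act piB) m fV aV).
Variable H : T -> V.
Hypotheses (H_lin : lin H) (H_pure : forall a b, H (t a b) = m (piA a) (piB b)).

Lemma cmp_form u v : fV (H u) (H v) = chi (sa_mul (sa_star v) u).
Proof.
have [[t_tensor [t_mul [_ t_star]]] [chi_lin chi_pure]] := (t_alg, chi_tensor).
have [_ [fV_lin [fV_conj [_ [fV_pure _]]]]] := V_tensor.
have H_form_pure a b w : fV (H (t a b)) (H w) = chi (sa_mul (sa_star w) (t a b)).
  apply: (@tensor_ext_conj _ _ _ _ _ t_tensor (fun w => fV (H (t a b)) (H w))
    (fun w => chi (sa_mul (sa_star w) (t a b))) _ (state_conj_lin _ chi_lin) _ w).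
    by move=> c x y /=; rewrite H_lin fV_conj rmorphD rmorphM /= conjCK.
  move=> a' b'; rewrite !H_pure fV_pure (gns_form_pi hA phi_state).
  by rewrite (gns_form_pi hB psi_state) t_star t_mul chi_pure sa_star_mulC.
apply: (@tensor_ext _ _ _ _ _ t_tensor C^o (fun u => fV (H u) (H v))
  (fun u => chi (sa_mul (sa_star v) u)) _ _ (fun a b => H_form_pure a b v) u).
  by move=> c x y /=; rewrite H_lin fV_lin.
by move=> c x y /=; rewrite mulr_lin chi_lin.
Qed.

Lemma cmp_perp u : perp chi u -> H u = 0.
Proof.
have [[A_form [_ [A_nondeg _]]] _] := gns_objects phi_state hA.
have [[B_form [_ [B_nondeg _]]] _] := gns_objects psi_state hB.
have [m_tensor [fV_lin [_ [_ [fV_pure _]]]]] := V_tensor.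
move=> u_perp; apply: (tensor_form_nondeg A_form A_nondeg m_tensor.1 B_form B_nondeg
  m_tensor fV_lin fV_pure) => x y.
by rewrite -(repK hA x) -(repK hB y) -H_pure cmp_form u_perp.
Qed.

Lemma cmp_act a u : H (sa_mul a u) = aV a (H u).
Proof.
have [[t_tensor [t_mul _]] _] := (t_alg, chi_tensor).
have [_ [_ [_ [[aV_linl aV_linr] [_ aV_pure]]]]] := V_tensor.
apply: (@tensor_ext _ _ _ _ _ t_tensor _ (fun a => H (sa_mul a u))
  (fun a => aV a (H u)) _ _ _ a).
- exact: (lin_comp H_lin (mull_lin u)).
- by move=> c a1 a2 /=; rewrite aV_linl.
move=> a1 b1; apply: (@tensor_ext _ _ _ _ _ t_tensor _ (fun u => H (sa_mul (t a1 b1) u))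
  (fun u => aV (t a1 b1) (H u)) _ _ _ u).
- exact: (lin_comp H_lin (mulr_lin _)).
- exact: (lin_comp (aV_linr _) H_lin).
by move=> a2 b2; rewrite /= t_mul !H_pure aV_pure (gns_act_pi hA) (gns_act_pi hB).
Qed.

Lemma cmp_descends :
  gns_cmp t piA piB piT m (fun q => H (rep piT q)) /\
  mod_mor (gns_form chi piT) (gns_act piT) fV aV id (fun q => H (rep piT q)).
Proof.
have H_rep u : H (rep piT (piT u)) = H u.
  by apply/eqP; rewrite -subr_eq0 -(linB H_lin); apply/eqP/cmp_perp/rep_perp.
have surj := gns_surj hT.
have chi_state := state_tensor_is_state phi_state psi_state t_alg chi_tensor.
have h_lin : lin (fun q => H (rep piT q)).
  move=> c x y; have [u <-] := surj x; have [v <-] := surj y.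
  by rewrite -(gns_lin hT) !H_rep H_lin.
split; first by split=> // a b; rewrite H_rep H_pure.
do 2!split=> //; split=> [x y|a x].
  have [u <-] := surj x; have [v <-] := surj y.
  by rewrite !H_rep cmp_form (gns_form_pi hT chi_state).
by have [u <-] := surj x; rewrite (gns_act_pi hT) !H_rep cmp_act.
Qed.

End TensorComparison.

Lemma gns_tensor_iso (C : numClosedFieldType) : GNS_tensor_iso C.
Proof.
move=> A B T t phi psi chi QA QB QT piA piB piT V m fV aV sA sB t_alg t_state
  hA hB hT V_tensor.
have [[[tl tr] t_univ] _] := t_alg; have [[[ml mr] m_univ] _] := V_tensor.
have pure_bilin : bilin (fun a b => m (piA a) (piB b)).
  by split=> [b c a a'|a c b b'] /=; rewrite ?(gns_lin hA) ?(gns_lin hB) ?ml ?mr.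
have [H [[H_lin H_pure] _]] := t_univ V _ pure_bilin.
have [[h_lin h_pure] h_mor] := cmp_descends sA sB t_alg t_state hA hB hT V_tensor H_lin H_pure.
have [K [[K_lin K_pure] _]] := m_univ QT _ (gns_tensor_rep_bilin t_alg t_state hA hB hT).
exists (fun q => H (rep piT q)); split=> //; split=> //; exists K.
  move=> q; have [u <-] := gns_surj hT q.
  apply: (@tensor_ext _ _ _ _ _ t_alg.1 _ (fun u => K (H (rep piT (piT u)))) piT _ _ _ u).
  - exact: (lin_comp K_lin (lin_comp h_lin (gns_lin hT))).
  - exact: gns_lin hT.
  by move=> a b; rewrite /= h_pure K_pure (gns_tensor_rep t_alg t_state hA hB hT).
move=> v; apply: (@tensor_ext _ _ _ _ _ V_tensor.1 _ (fun v => H (rep piT (K v))) id _ _ _ v).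
- exact: (lin_comp h_lin K_lin).
- by [].
by move=> x y; rewrite /= K_pure h_pure (repK hA) (repK hB).
Qed.

Theorem mainTheorem8 (R : realType) :
  GNS_objects R[i] /\ GNS_morphisms R[i] /\ GNS_functorial R[i] /\
  GNS_tensor_iso R[i] /\ GNS_tensor_natural R[i] /\ GNS_unit R[i] /\
  GNS_assoc R[i] /\ GNS_unitors R[i] /\ GNS_symmetry R[i].
Proof.
split; first exact: gns_objects.
split; first exact: gns_morphisms.
split; first exact: gns_functorial.
split; first exact: gns_tensor_iso.
split; first exact: gns_tensor_natural.
split; first exact: gns_unit.
split; first exact: gns_assoc.
split; first exact: gns_unitors.
exact: gns_symmetry.
Qed.
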